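(* Let $\mathcal{A}=\{1,\dots,m\}$, $\mathcal{B}=\{1,\dots,n\}$ and $\phi:\mathcal{A}\times\mathcal{B}\to\mathbb{R}^d$ with $\|\phi(a,b)\|_2\le L$. Let $\mu^*\in\Delta(\mathcal{A}),\nu^*\in\Delta(\mathcal{B})$ with $\min_{a,b}\{\mu^*(a),\nu^*(b)\}\ge\xi>0$, and let $\hat\mu\in\Delta(\mathcal{A}),\hat\nu\in\Delta(\mathcal{B})$ satisfy $\|\hat\mu-\mu^*\|_1\le\epsilon_\mu$ and $\|\hat\nu-\nu^*\|_1\le\epsilon_\nu$ with $\epsilon_\mu<\xi/2$ and $\epsilon_\nu<\xi/2$. Let $\epsilon_N=\epsilon_\mu+\epsilon_\nu$, $\hat X=X(\hat\mu,\hat\nu)$, $X^*=X(\mu^*,\nu^* )$, $\hat y=y(\hat\mu,\hat\nu)$, $y^*=y(\mu^*,\nu^* )$. Then $$\|\hat X-X^*\|_{op}\le C_X\epsilon_N,\qquad\|\hat y-y^*\|_2\le C_Y\epsilon_N,$$ with $C_X=2L\sqrt{m+n}$ and $C_Y=\sqrt{8(m+n)}/\xi$.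
   Context: For full-support $\mu,\nu$: $A(\nu)\in\mathbb{R}^{(m-1)\times d}$ has row $a-1$ ($a=2,\dots,m$) equal to $\sum_{b'\in\mathcal{B}}\nu(b')(\phi(a,b')-\phi(1,b'))^\top$; $B(\mu)\in\mathbb{R}^{(n-1)\times d}$ has row $b-1$ ($b=2,\dots,n$) equal to $\sum_{a'\in\mathcal{A}}\mu(a')(\phi(a',1)-\phi(a',b))^\top$; $c(\mu)_{a-1}=\log(\mu(a)/\mu(1))$; $d(\nu)_{b-1}=\log(\nu(b)/\nu(1))$; $X(\mu,\nu)=[A(\nu)^\top,B(\mu)^\top]^\top$ and $y(\mu,\nu)=[c(\mu)^\top,d(\nu)^\top]^\top$. $\|\cdot\|_{op}$ is the spectral norm. In the paper, $\hat\mu,\hat\nu$ are empirical frequency estimates of the QRE $(\mu^*,\nu^* )$ and the hypotheses hold on the high-probability event of the policy-estimation lemma. *)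

From HB Require Import structures.
From mathcomp Require Import all_boot all_order all_algebra.
From mathcomp Require Import classical_sets reals exp.
Set Implicit Arguments. Unset Strict Implicit. Unset Printing Implicit Defensive.
Import Order.TTheory GRing.Theory Num.Theory.
Local Open Scope ring_scope.
Local Open Scope classical_set_scope.

Section Defs.
Variable R : realType.

Definition vnorm2 k (v : 'cV[R]_k) : R := Num.sqrt (\sum_i (v i 0) ^+ 2).

Definition opnorm p q (M : 'M[R]_(p, q)) : R :=
  sup [set vnorm2 (M *m v) | v in [set v : 'cV[R]_q | vnorm2 v <= 1]].

Definition is_distr (T : finType) (p : T -> R) : Prop :=
  (forall t, 0 <= p t) /\ \sum_t p t = 1.

Definition l1dist (T : finType) (p q : T -> R) : R := \sum_t `|p t - q t|.

(* Action sets A = 'I_m.+1, B = 'I_n.+1; the paper's action "1" is ord0,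
   action a = 2..m corresponds to lift ord0 i with i : 'I_m (row a-1 = i). *)
Variables (m n d : nat) (phi : 'I_m.+1 -> 'I_n.+1 -> 'cV[R]_d).

Definition Amat (nu : 'I_n.+1 -> R) : 'M[R]_(m, d) :=
  \matrix_(i < m) (\sum_b nu b *: (phi (lift ord0 i) b - phi ord0 b)^T).

Definition Bmat (mu : 'I_m.+1 -> R) : 'M[R]_(n, d) :=
  \matrix_(j < n) (\sum_a mu a *: (phi a ord0 - phi a (lift ord0 j))^T).

Definition cvec (mu : 'I_m.+1 -> R) : 'cV[R]_m :=
  \col_(i < m) ln (mu (lift ord0 i) / mu ord0).

Definition dvec (nu : 'I_n.+1 -> R) : 'cV[R]_n :=
  \col_(j < n) ln (nu (lift ord0 j) / nu ord0).

Definition Xmat (mu : 'I_m.+1 -> R) (nu : 'I_n.+1 -> R) : 'M[R]_(m + n, d) :=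
  col_mx (Amat nu) (Bmat mu).

Definition yvec (mu : 'I_m.+1 -> R) (nu : 'I_n.+1 -> R) : 'cV[R]_(m + n) :=
  col_mx (cvec mu) (dvec nu).

End Defs.

From HB Require Import structures.
From mathcomp Require Import all_boot all_order all_algebra.
From mathcomp Require Import classical_sets reals exp.
From mathcomp Require Import ring lra zify.
Import Order.TTheory GRing.Theory Num.Theory.
Set Implicit Arguments. Unset Strict Implicit. Unset Printing Implicit Defensive.
Local Open Scope ring_scope.

(* An entry of (X(mu', nu') - X(mu, nu)) v is a sum of the weights nu' b - nu b
   (or mu' a - mu a) against differences of two inner products <phi a b, v>,
   each at most L by Cauchy-Schwarz when |v| <= 1, hence it is at most
   2 L |nu' - nu|_1; the rows of B are, up to sign, those of A for the
   transposed feature map. For y, the l1 bound keeps every probability above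
   xi / 2, where ln is (2 / xi)-Lipschitz, and a difference of log-ratios
   involves only two coordinates of the l1 distance. Bounding all m + n entries
   by the same quantity gives the factor sqrt (m + n). *)

Section EuclideanNorm.
Variable R : realType.

Definition vdot k (u v : 'cV[R]_k) : R := \sum_i u i 0 * v i 0.

Lemma vnorm2_ge0 k (u : 'cV[R]_k) : 0 <= vnorm2 u.
Proof. exact: sqrtr_ge0. Qed.

Lemma vnorm2_0 k : vnorm2 (0 : 'cV[R]_k) = 0.
Proof. by rewrite /vnorm2 big1 ?sqrtr0 // => i _; rewrite mxE expr0n. Qed.

Lemma sum_mul_sqr_le (I : finType) (a b : I -> R) :
  (\sum_i a i * b i) ^+ 2 <= (\sum_i a i ^+ 2) * (\sum_i b i ^+ 2).
Proof.
set S := \sum_i a i * b i; set SA := \sum_i a i ^+ 2; set SB := \sum_i b i ^+ 2.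
have lagrange : \sum_i \sum_j (a i * b j - a j * b i) ^+ 2 = 2 * (SA * SB - S ^+ 2).
  transitivity (\sum_i (a i ^+ 2 * SB + b i ^+ 2 * SA - 2 * (a i * b i) * S)).
    apply: eq_bigr => i _; rewrite !mulr_sumr -!big_split -sumrB /=.
    by apply: eq_bigr => j _; ring.
  by rewrite sumrB big_split /= -!mulr_suml -mulr_sumr -/S -/SA -/SB; ring.
suff : 0 <= 2 * (SA * SB - S ^+ 2) by lra.
by rewrite -lagrange; do 2!apply: sumr_ge0 => ? _; exact: sqr_ge0.
Qed.

Lemma normr_vdot_le k (u v : 'cV[R]_k) : `|vdot u v| <= vnorm2 u * vnorm2 v.
Proof.
have sqr_sum_ge0 (w : 'cV[R]_k) : 0 <= \sum_i w i 0 ^+ 2.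
  by apply: sumr_ge0 => i _; exact: sqr_ge0.
rewrite /vnorm2 -sqrtrM // -sqrtr_sqr ler_sqrt ?mulr_ge0 //.
exact: sum_mul_sqr_le.
Qed.

Lemma vnorm2_le_entries k (u : 'cV[R]_k) (K : R) : 0 <= K ->
  (forall i, `|u i 0| <= K) -> vnorm2 u <= Num.sqrt k%:R * K.
Proof.
move=> K_ge0 uK; rewrite -[K in _ * K]ger0_norm // -sqrtr_sqr -sqrtrM ?ler0n //.
rewrite ler_sqrt ?mulr_ge0 ?ler0n ?sqr_ge0 // mulr_natl -[k in _ *+ k]card_ord.
rewrite -sumr_const; apply: ler_sum => i _.
by rewrite -real_normK ?num_real //; apply: lerXn2r; rewrite ?nnegrE.
Qed.

Lemma vnorm2_col_mx_le p q (u : 'cV[R]_p) (w : 'cV[R]_q) (K : R) : 0 <= K ->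
  (forall i, `|u i 0| <= K) -> (forall j, `|w j 0| <= K) ->
  vnorm2 (col_mx u w) <= Num.sqrt (p + q)%:R * K.
Proof.
move=> K_ge0 uK wK; apply: vnorm2_le_entries => // i.
by rewrite -(splitK i); case: (split i) => j; rewrite /= ?col_mxEu ?col_mxEd.
Qed.

Lemma opnorm_le p q (M : 'M[R]_(p, q)) (K : R) :
  (forall v, vnorm2 v <= 1 -> vnorm2 (M *m v) <= K) -> opnorm M <= K.
Proof.
move=> MK; apply: ge_sup => [|_ [v v_le1 <-]]; last exact: MK.
by exists (vnorm2 (M *m 0)), 0; rewrite //= vnorm2_0 ler01.
Qed.

End EuclideanNorm.

Section LogRatios.
Variable R : realType.

Lemma mul_lnB_le (x y : R) : 0 < x -> 0 < y -> y * (ln x - ln y) <= x - y.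
Proof.
move=> x_gt0 y_gt0; rewrite -ln_div ?posrE //.
have -> : x / y = 1 + (x / y - 1) by ring.
have -> : x - y = y * (x / y - 1) by field; rewrite gt_eqF.
by rewrite ler_pM2l //; apply: le_ln1Dx; rewrite ltrBrDr addNr divr_gt0.
Qed.

Lemma normr_lnB_le (c x y : R) : 0 < c -> c <= x -> c <= y ->
  c * `|ln x - ln y| <= `|x - y|.
Proof.
wlog yx : x y / y <= x => [hwlog|c_gt0 cx cy].
  case/orP: (le_total y x) => [/hwlog //|/hwlog hyx c_gt0 cx cy].
  by rewrite distrC (distrC x); exact: hyx.
have y_gt0 := lt_le_trans c_gt0 cy; have x_gt0 := lt_le_trans c_gt0 cx.
have lnyx : 0 <= ln x - ln y by rewrite subr_ge0 ler_ln ?posrE.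
rewrite (ger0_norm lnyx) ger0_norm ?subr_ge0 //.
by apply: le_trans (mul_lnB_le x_gt0 y_gt0); rewrite ler_wpM2r.
Qed.

Lemma l1dist_ge0 (T : finType) (p q : T -> R) : 0 <= l1dist p q.
Proof. by apply: sumr_ge0 => t _; exact: normr_ge0. Qed.

Lemma l1dist_ge_norm (T : finType) (p q : T -> R) t : `|p t - q t| <= l1dist p q.
Proof. by rewrite /l1dist (bigD1 t) //= lerDl sumr_ge0. Qed.

Lemma l1dist_ge_norm2 (T : finType) (p q : T -> R) s t : s != t ->
  `|p s - q s| + `|p t - q t| <= l1dist p q.
Proof.
move=> st; rewrite /l1dist (bigD1 s) //= lerD2l (bigD1 t) 1?eq_sym //=.
by rewrite lerDl sumr_ge0.
Qed.

Lemma l1dist_lower_bound (T : finType) (p q : T -> R) (c e : R) :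
  (forall t, c <= q t) -> l1dist p q <= e -> forall t, c - e <= p t.
Proof.
move=> qc pqe t; have := l1dist_ge_norm p q t; have := qc t.
rewrite real_lter_distl ?num_real //; lra.
Qed.

Lemma normr_ln_ratioB_le (T : finType) (p q : T -> R) (c : R) s t :
  s != t -> 0 < c -> (forall t, c <= p t) -> (forall t, c <= q t) ->
  c * `|ln (p s / p t) - ln (q s / q t)| <= l1dist p q.
Proof.
move=> st c_gt0 pc qc.
have pos u : 0 < p u /\ 0 < q u by split; apply: lt_le_trans c_gt0 _.
rewrite !ln_div ?posrE ?(pos s).1 ?(pos s).2 ?(pos t).1 ?(pos t).2 //.
have -> : ln (p s) - ln (p t) - (ln (q s) - ln (q t)) =
          (ln (p s) - ln (q s)) - (ln (p t) - ln (q t)) by ring.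
apply: le_trans _ (l1dist_ge_norm2 p q st).
apply: le_trans (ler_wpM2l (ltW c_gt0) (ler_normB _ _)) _.
rewrite mulrDr; apply: lerD; exact: normr_lnB_le.
Qed.

Lemma normr_cvecB_le k (p q : 'I_k.+1 -> R) (xi e : R) : 0 < xi ->
  (forall a, xi <= q a) -> l1dist p q <= e -> e < xi / 2 ->
  forall i, `|(cvec p - cvec q) i 0| <= e / (xi / 2).
Proof.
move=> xi_gt0 q_ge pq_le e_lt i.
have c_gt0 : 0 < xi / 2 by rewrite divr_gt0.
have p_ge a : xi / 2 <= p a.
  by apply: le_trans (l1dist_lower_bound q_ge pq_le a); lra.
have q_ge' a : xi / 2 <= q a by have := q_ge a; lra.
rewrite ler_pdivlMr // mulrC !mxE; apply: le_trans pq_le.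
by apply: normr_ln_ratioB_le; rewrite // eq_sym neq_lift.
Qed.

End LogRatios.

Section FeatureMatrices.
Variables (R : realType) (m n d : nat) (phi : 'I_m.+1 -> 'I_n.+1 -> 'cV[R]_d).

Lemma Amat_mulmx_entry nu (v : 'cV[R]_d) i :
  (Amat phi nu *m v) i 0 =
  \sum_b nu b * (vdot (phi (lift ord0 i) b) v - vdot (phi ord0 b) v).
Proof.
rewrite mxE /vdot; under [RHS]eq_bigr => b _ do rewrite -sumrB mulr_sumr.
rewrite exchange_big /=; apply: eq_bigr => k _.
rewrite !mxE summxE big_distrl /=; apply: eq_bigr => b _.
by rewrite !mxE; ring.
Qed.

Lemma Bmat_Amat mu : Bmat phi mu = - Amat (fun b a => phi a b) mu.
Proof.
apply/matrixP => j k; rewrite !mxE !summxE -sumrN; apply: eq_bigr => a _.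
by rewrite !mxE; ring.
Qed.

Lemma normr_AmatB_mulmx_le (L : R) nu nu' (v : 'cV[R]_d) :
  (forall a b, vnorm2 (phi a b) <= L) -> vnorm2 v <= 1 ->
  forall i, `|((Amat phi nu - Amat phi nu') *m v) i 0| <= 2 * L * l1dist nu nu'.
Proof.
move=> phiL v_le1 i.
have dotL u : vnorm2 u <= L -> `|vdot u v| <= L.
  move=> uL; apply: le_trans (normr_vdot_le u v) _.
  by rewrite -[L]mulr1 ler_pM ?vnorm2_ge0.
rewrite mulmxBl mxE Amat_mulmx_entry mxE Amat_mulmx_entry -sumrB /l1dist mulr_sumr.
apply: le_trans (ler_norm_sum _ _ _) _; apply: ler_sum => b _.
rewrite -mulrBl normrM mulrC ler_wpM2r //.
apply: le_trans (ler_normB _ _) _; rewrite mulr2n mulrDl mul1r.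
by apply: lerD; apply: dotL.
Qed.

End FeatureMatrices.

Lemma normr_BmatB_mulmx_le (R : realType) m n d
    (phi : 'I_m.+1 -> 'I_n.+1 -> 'cV[R]_d) (L : R) mu mu' (v : 'cV[R]_d) :
  (forall a b, vnorm2 (phi a b) <= L) -> vnorm2 v <= 1 ->
  forall j, `|((Bmat phi mu - Bmat phi mu') *m v) j 0| <= 2 * L * l1dist mu mu'.
Proof.
move=> phiL v_le1 j; rewrite !Bmat_Amat -opprD mulNmx mxE normrN.
exact: normr_AmatB_mulmx_le.
Qed.

Theorem lemma2 (R : realType) (m n d : nat)
  (phi : 'I_m.+1 -> 'I_n.+1 -> 'cV[R]_d) (L xi eps_mu eps_nu : R)
  (mus muh : 'I_m.+1 -> R) (nus nuh : 'I_n.+1 -> R) :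
  (forall a b, vnorm2 (phi a b) <= L) ->
  is_distr mus -> is_distr nus -> is_distr muh -> is_distr nuh ->
  0 < xi ->
  (forall a, xi <= mus a) -> (forall b, xi <= nus b) ->
  l1dist muh mus <= eps_mu -> l1dist nuh nus <= eps_nu ->
  eps_mu < xi / 2 -> eps_nu < xi / 2 ->
  let epsN := eps_mu + eps_nu in
  let CX := 2 * L * Num.sqrt ((m.+1 + n.+1)%:R) in
  let CY := Num.sqrt (8 * (m.+1 + n.+1)%:R) / xi in
  opnorm (Xmat phi muh nuh - Xmat phi mus nus) <= CX * epsN /\
  vnorm2 (yvec muh nuh - yvec mus nus) <= CY * epsN.
Proof.
move=> phiL _ _ _ _ xi_gt0 mus_ge nus_ge dmu dnu mu_lt nu_lt epsN CX CY.
have L_ge0 : 0 <= L := le_trans (vnorm2_ge0 _) (phiL ord0 ord0).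
have mu_ge0 : 0 <= eps_mu := le_trans (l1dist_ge0 _ _) dmu.
have nu_ge0 : 0 <= eps_nu := le_trans (l1dist_ge0 _ _) dnu.
have epsN_ge0 : 0 <= epsN by rewrite addr_ge0.
have sqrt_le : Num.sqrt (m + n)%:R <= Num.sqrt (m.+1 + n.+1)%:R :> R.
  by rewrite ler_sqrt ?ler0n // ler_nat; lia.
split.
  apply: opnorm_le => v v_le1; rewrite opp_col_mx add_col_mx mul_col_mx.
  have K_ge0 : 0 <= 2 * L * epsN by rewrite !mulr_ge0.
  apply: le_trans (vnorm2_col_mx_le K_ge0 _ _) _.
  - move=> i; apply: le_trans (normr_AmatB_mulmx_le _ _ phiL v_le1 i) _.
    by rewrite ler_wpM2l ?mulr_ge0 // (le_trans dnu) // lerDr.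
  - move=> j; apply: le_trans (normr_BmatB_mulmx_le _ _ phiL v_le1 j) _.
    by rewrite ler_wpM2l ?mulr_ge0 // (le_trans dmu) // lerDl.
  - by have := ler_wpM2r K_ge0 sqrt_le; rewrite /CX; nra.
rewrite opp_col_mx add_col_mx.
have c_gt0 : 0 < xi / 2 by rewrite divr_gt0.
have K_ge0 : 0 <= epsN / (xi / 2) by rewrite divr_ge0 ?(ltW c_gt0).
apply: le_trans (vnorm2_col_mx_le K_ge0 _ _) _.
- move=> i; apply: le_trans (normr_cvecB_le xi_gt0 mus_ge dmu mu_lt i) _.
  by rewrite ler_pM2r ?invr_gt0 // /epsN lerDl.
- (* [dvec] is convertible to [cvec]. *)
  move=> j; apply: le_trans (normr_cvecB_le xi_gt0 nus_ge dnu nu_lt j) _.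
  by rewrite ler_pM2r ?invr_gt0 // /epsN lerDr.
have sqrt8 : 2 * Num.sqrt (m + n)%:R <= Num.sqrt (8 * (m.+1 + n.+1)%:R) :> R.
  have -> : 2 = Num.sqrt (2 ^+ 2) :> R by rewrite sqrtr_sqr ger0_norm.
  rewrite -sqrtrM ?sqr_ge0 // ler_sqrt ?mulr_ge0 ?ler0n //.
  by rewrite -natrX -!natrM ler_nat; lia.
have -> : epsN / (xi / 2) = 2 * (epsN / xi) by field; rewrite gt_eqF.
by have := ler_wpM2r (divr_ge0 epsN_ge0 (ltW xi_gt0)) sqrt8; rewrite /CY; lra.
Qed.
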